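(* The genus of a based matrix over a domain $R$ is a homology invariant: homologous based matrices over $R$ have equal genus.
   Context: $R$ is a commutative ring with unit and no zero-divisors. A based matrix over $R$ is a triple $(G,s,b)$, $G$ a finite set, $s\in G$, $b:G\times G\to R$ with $b(g,h)=-b(h,g)$, $b(g,g)=0$. For $X,Y\subset G$, $b(X,Y)=\sum_{g\in X,h\in Y}b(g,h)$. A filling of $T=(G,s,b)$ is a finite family $\{X_i\}$ of pairwise disjoint (possibly empty) subsets of $G$ with $\bigcup X_i=G$, $\#X_i\le2$ for all $i$, and one $X_i$ equal to $\{s\}$; its matrix is $(b(X_i,X_j))_{i,j}$, and $\sigma(\{X_i\})$ is half the rank (maximal size of a nonzero minor) of this matrix. The genus is $\sigma(T)=\min\sigma(\mathcal{X})$ over all fillings $\mathcal{X}$. Elementary extensions: $M_1$ adds a new element $g$ with $b(g,h)=0$ for all $h$; $M_2$ adds $g$ with $b(g,h)=b(s,h)$ for all $h$; $M_3$ adds $g_1,g_2$ with a skew-symmetric zero-diagonal extension such that $b(g_1,h)+b(g_2,h)=b(s,h)$ for all $h$. Isomorphism: bijection sending $s$ to $s'$ and $b$ to $b'$. Homologous: related by elementary extensions, their inverses and isomorphisms. *)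

From HB Require Import structures.
From mathcomp Require Import all_boot all_order all_algebra.
Unset Strict Implicit. Unset Printing Implicit Defensive.
Import Order.TTheory GRing.Theory Num.Theory.
Local Open Scope ring_scope.

Record bmat (R : idomainType) := BMat {
  bG : finType;
  bs : bG;
  bb : bG -> bG -> R;
  bb_skew : forall g h, bb g h = - bb h g;
  bb_diag : forall g, bb g g = 0 }.

Arguments bs {R} b.
Arguments bb {R} b _ _.
Arguments bG {R} b.

Section BasedMatrices.
Variable R : idomainType.

Definition bset (T : bmat R) (X Y : {set bG T}) : R :=
  \sum_(g in X) \sum_(h in Y) bb T g h.

Definition minor_rank (m : nat) (M : 'M[R]_m) : nat :=
  \max_(k < m.+1 | [exists f : {ffun 'I_k -> 'I_m}, exists g : {ffun 'I_k -> 'I_m},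
        [&& injectiveb f, injectiveb g &
            \det (\matrix_(i < k, j < k) M (f i) (g j)) != 0]]) k.

Definition is_filling (T : bmat R) (m : nat) (X : 'I_m -> {set bG T}) : Prop :=
  [/\ forall i j, i != j -> [disjoint X i & X j],
      \bigcup_(i < m) X i = [set: bG T],
      forall i, #|X i| <= 2
    & exists i, X i = [set bs T]]%N.

Definition filling_matrix (T : bmat R) (m : nat) (X : 'I_m -> {set bG T}) : 'M[R]_m :=
  \matrix_(i < m, j < m) bset T (X i) (X j).

Definition filling_sigma (T : bmat R) (m : nat) (X : 'I_m -> {set bG T}) : nat :=
  ((minor_rank m (filling_matrix T m X))./2)%N.

Definition is_genus (T : bmat R) (k : nat) : Prop :=
  (exists m (X : 'I_m -> {set bG T}), is_filling T m X /\ filling_sigma T m X = k) /\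
  (forall m (X : 'I_m -> {set bG T}), is_filling T m X -> (k <= filling_sigma T m X)%N).

Definition bmat_iso (T T' : bmat R) : Prop :=
  exists phi : bG T -> bG T', [/\ bijective phi, phi (bs T) = bs T' &
    forall x y, bb T' (phi x) (phi y) = bb T x y].

Definition bmat_emb (T T' : bmat R) (f : bG T -> bG T') : Prop :=
  [/\ injective f, f (bs T) = bs T' & forall x y, bb T' (f x) (f y) = bb T x y].

Definition ext_M1 (T T' : bmat R) : Prop :=
  exists (f : bG T -> bG T') (g : bG T'), [/\ bmat_emb T T' f,
    forall x, f x <> g,
    forall y, y = g \/ exists x, y = f x
  & forall x, bb T' g (f x) = 0].

Definition ext_M2 (T T' : bmat R) : Prop :=
  exists (f : bG T -> bG T') (g : bG T'), [/\ bmat_emb T T' f,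
    forall x, f x <> g,
    forall y, y = g \/ exists x, y = f x
  & forall x, bb T' g (f x) = bb T (bs T) x].

Definition ext_M3 (T T' : bmat R) : Prop :=
  exists (f : bG T -> bG T') (g1 g2 : bG T'), [/\ bmat_emb T T' f, g1 <> g2,
    forall x, f x <> g1 /\ f x <> g2,
    forall y, [\/ y = g1, y = g2 | exists x, y = f x]
  & forall x, bb T' g1 (f x) + bb T' g2 (f x) = bb T (bs T) x].

Definition elem_ext (T T' : bmat R) : Prop :=
  [\/ ext_M1 T T', ext_M2 T T' | ext_M3 T T'].

Inductive homologous : bmat R -> bmat R -> Prop :=
  | hom_refl T : homologous T T
  | hom_iso T T' : bmat_iso T T' -> homologous T T'
  | hom_ext T T' : elem_ext T T' -> homologous T T'
  | hom_ext_inv T T' : elem_ext T' T -> homologous T T'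
  | hom_sym T T' : homologous T T' -> homologous T' T
  | hom_trans T1 T2 T3 : homologous T1 T2 -> homologous T2 T3 -> homologous T1 T3.

End BasedMatrices.
Arguments bs {R} b.
Arguments bb {R} b _ _.
Arguments bG {R} b.
Arguments is_genus {R} T k.
Arguments homologous {R} _ _.

(* Homology is generated by isomorphisms and the moves M1-M3, so it suffices to show that
   for each move T -> U every filling of T is matched by a filling of U with no larger
   sigma, and conversely.  Writing B for the matrix of b and V for the matrix whose rows
   are the indicator vectors of the blocks, the matrix of a filling is V B V^T.  In every
   move the set N of new elements satisfies b(x, N) = c b(x, s) for all old x (c = 0 for
   M1 and for isomorphisms, where N is empty; c = 1 for M2 and M3), so u := 1_N - c 1_s
   is b-orthogonal to the old elements and to itself.  A filling of T extends to U by
   adding N as one more block; a filling of U restricts to T after merging the (at most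
   two) blocks that contain N.  Either way the new indicator rows are P times the old ones
   up to multiples of u, so the new matrix is P M P^T, whose rank, computed over the
   fraction field of R, is at most that of M. *)

From mathcomp Require Import all_boot all_order all_algebra.
From mathcomp Require Import fraction.
Import Order.TTheory GRing.Theory Num.Theory.
Local Open Scope ring_scope.

Lemma mxrank_mxsub (F : fieldType) m n m' n' (f : 'I_m' -> 'I_m) (g : 'I_n' -> 'I_n)
    (A : 'M[F]_(m, n)) :
  (\rank (mxsub f g A) <= \rank A)%N.
Proof.
rewrite mxsubrc; apply: leq_trans (mxrankS (rowsub_sub f _)) _.
by rewrite -mxrank_tr -[leqRHS]mxrank_tr trmx_mxsub mxrankS ?rowsub_sub.
Qed.

(* B = A - A^T for the strictly upper triangular part A of B, and a 1 x 1 matrix is its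
   own transpose; no division by 2 is needed. *)
Lemma alt_mx_isotropic (R : comRingType) n (B : 'M[R]_n) (v : 'rV[R]_n) :
  B^T = - B -> (forall k, B k k = 0) -> v *m B *m v^T = 0.
Proof.
move=> Bskew Bdiag.
pose A := \matrix_(k, l) if (k < l)%N then B k l else 0.
have -> : B = A - A^T.
  apply/matrixP => k l; rewrite !mxE.
  case: ltngtP => [_|_|/val_inj ->]; rewrite ?subr0 ?sub0r ?Bdiag //.
  by move/matrixP/(_ l k): Bskew; rewrite !mxE.
have trmx11 (x : 'M[R]_1) : x^T = x by apply/matrixP => i j; rewrite !ord1 mxE.
by rewrite mulmxBr mulmxBl -[v *m A *m v^T]trmx11 !trmx_mul trmxK mulmxA subrr.
Qed.

Lemma form_congr_shift (R : comRingType) n n' m (B : 'M[R]_n) (B' : 'M_n')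
    (F : 'M_(n', n)) (u : 'rV_n) (V : 'M_(m, n')) (d : 'cV_m) :
  B^T = - B -> u *m B *m u^T = 0 -> F *m B *m u^T = 0 -> F *m B *m F^T = B' ->
  (V *m F + d *m u) *m B *m (V *m F + d *m u)^T = V *m B' *m V^T.
Proof.
move=> Bskew uBu FBu FBF.
have uBF : u *m B *m F^T = 0.
  apply: trmx_inj; rewrite !trmx_mul trmxK Bskew mulNmx mulmxN mulmxA FBu.
  by rewrite oppr0 trmx0.
have WBF : (V *m F + d *m u) *m B *m F^T = V *m B'.
  by rewrite !mulmxDl -!mulmxA !(mulmxA u) uBF mulmx0 addr0 (mulmxA F) FBF.
have WBu : (V *m F + d *m u) *m B *m u^T = 0.
  by rewrite !mulmxDl -!mulmxA !(mulmxA u) uBu !(mulmxA F) FBu !mulmx0 addr0.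
by rewrite [in X in _ *m X]linearD /= !trmx_mul mulmxDr !mulmxA WBF WBu mul0mx addr0.
Qed.

Lemma sum_delta_mull (R : nzSemiRingType) (I : finType) (a : I) (F : I -> R) :
  \sum_b (a == b)%:R * F b = F a.
Proof.
rewrite (bigD1 a) //= eqxx mul1r big1 ?addr0 // => b.
by rewrite eq_sym => /negPf ->; rewrite mul0r.
Qed.

Lemma mul_delta_mxE {R : pzSemiRingType} {m n p} (i : 'I_m) (j : 'I_n)
    (M : 'M[R]_(n, p)) a l :
  (delta_mx i j *m M) a l = (a == i)%:R * M j l.
Proof.
rewrite -(mul_delta_mx (0 : 'I_1)) -mulmxA -rowE !mxE big_ord1 !mxE eqxx.
by rewrite andbT.
Qed.

Lemma imset_preimset (aT rT : finType) (f : aT -> rT) (A : {set rT}) :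
  f @: (f @^-1: A) = A :&: f @: setT.
Proof.
apply/setP => y; rewrite inE; apply/imsetP/andP => [[x xA ->]|[yA /imsetP[x _ yfx]]].
  by move: xA; rewrite inE => ->; rewrite imset_f.
by exists x; rewrite // inE -yfx.
Qed.

Lemma setC_imset_eq (aT rT : finType) (f : aT -> rT) (A : {set rT}) :
    (forall x, f x \notin A) -> (forall y, y \notin A -> exists x, y = f x) ->
  ~: (f @: [set: aT]) = A.
Proof.
move=> fA A_old; apply/setP => y; rewrite inE; apply/idP/idP => [y_new|yA].
  by apply: contraR y_new => /A_old[x ->]; rewrite imset_f.
by apply/imsetP => -[x _ yfx]; move: yA; rewrite yfx (negPf (fA x)).
Qed.

Section Genus.
Variable R : idomainType.
Implicit Types T U : bmat R.

Lemma minor_rankE m (M : 'M[R]_m) : minor_rank R m M = \rank (map_mx (@tofrac R) M).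
Proof.
set A := map_mx _ M.
apply/eqP; rewrite eqn_leq; apply/andP; split.
  apply/bigmax_leqP => k /existsP[f /existsP[g /and3P[_ _ det_neq0]]].
  have <- : \rank (mxsub f g A) = k.
    by rewrite mxrank_unit // unitmxE unitfE -map_mxsub det_map_mx tofrac_eq0.
  exact: mxrank_mxsub.
pose f := maxrankfun A.
have fullB : row_full (rowsub f A)^T.
  by rewrite /row_full mxrank_tr; apply: maxrowsub_free.
pose g := fullrankfun fullB.
have : rowsub g (rowsub f A)^T \in unitmx by apply: fullrowsub_unit.
rewrite trmx_mxsub -mxsubrc -trmx_mxsub unitmx_tr unitmxE unitfE -map_mxsub.
rewrite det_map_mx tofrac_eq0 => det_neq0.
have rank_lt : (\rank A < m.+1)%N by rewrite ltnS rank_leq_row.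
apply: (@leq_bigmax_cond _ _ _ (Ordinal rank_lt)).
apply/existsP; exists f; apply/existsP; exists g.
by rewrite det_neq0 andbT; apply/andP; split; apply/injectiveP;
  [apply: maxrankfun_inj | apply: fullrankfun_inj].
Qed.

Lemma minor_rank_mul m m' (P : 'M[R]_(m', m)) (M : 'M_m) (Q : 'M_(m, m')) :
  (minor_rank R m' (P *m M *m Q) <= minor_rank R m M)%N.
Proof.
rewrite !minor_rankE !map_mxM.
exact: leq_trans (mxrankM_maxl _ _) (mxrankM_maxr _ _).
Qed.

Lemma filling_sigma_le_congr {T U m m'} {X : 'I_m -> {set bG T}}
    {Y : 'I_m' -> {set bG U}} (P : 'M[R]_(m', m)) :
  filling_matrix R U m' Y = P *m filling_matrix R T m X *m P^T ->
  (filling_sigma R U m' Y <= filling_sigma R T m X)%N.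
Proof. by move=> eqM; rewrite /filling_sigma eqM half_leq ?minor_rank_mul. Qed.

Definition dominated_fillings T U : Prop :=
  forall m (X : 'I_m -> {set bG T}), is_filling R T m X ->
  exists m' (Y : 'I_m' -> {set bG U}),
    is_filling R U m' Y /\ (filling_sigma R U m' Y <= filling_sigma R T m X)%N.

Lemma dominated_fillings_refl T : dominated_fillings T T.
Proof. by move=> m X fillX; exists m, X. Qed.

Lemma dominated_fillings_trans T1 T2 T3 :
  dominated_fillings T1 T2 -> dominated_fillings T2 T3 -> dominated_fillings T1 T3.
Proof.
move=> d12 d23 m X fillX; have [m' [Y [fillY leYX]]] := d12 _ _ fillX.
have [m'' [Z [fillZ leZY]]] := d23 _ _ fillY.
by exists m'', Z; split => //; apply: leq_trans leZY leYX.
Qed.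

Lemma is_genus_dominated T U k :
  dominated_fillings T U -> dominated_fillings U T -> is_genus T k -> is_genus U k.
Proof.
move=> domTU domUT [[m [X [fillX <-]]] minT]; split.
  have [m' [Y [fillY leYX]]] := domTU _ _ fillX.
  exists m', Y; split => //; apply/eqP; rewrite eqn_leq leYX /=.
  have [m'' [Z [fillZ leZY]]] := domUT _ _ fillY.
  exact: leq_trans (minT _ _ fillZ) leZY.
move=> m' Y fillY; have [m'' [Z [fillZ leZY]]] := domUT _ _ fillY.
exact: leq_trans (minT _ _ fillZ) leZY.
Qed.

Definition form_mx T : 'M[R]_#|bG T| := \matrix_(k, l) bb T (enum_val k) (enum_val l).

Definition ind_mx {G : finType} {m} (X : 'I_m -> {set G}) : 'M[R]_(m, #|G|) :=
  \matrix_(a, k) (enum_val k \in X a)%:R.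

Lemma form_mx_skew T : (form_mx T)^T = - form_mx T.
Proof. by apply/matrixP => k l; rewrite !mxE bb_skew. Qed.

Lemma form_mx_alt T (v : 'rV_#|bG T|) : v *m form_mx T *m v^T = 0.
Proof. by apply: alt_mx_isotropic (form_mx_skew T) _ => k; rewrite mxE bb_diag. Qed.

Lemma ind_form_indE T m m' (X : 'I_m -> {set bG T}) (Y : 'I_m' -> {set bG T}) :
  ind_mx X *m form_mx T *m (ind_mx Y)^T = \matrix_(a, c) bset R T (X a) (Y c).
Proof.
apply/matrixP => a c; rewrite !mxE /bset.
have -> : \sum_(g in X a) \sum_(h in Y c) bb T g h =
    \sum_g \sum_h (g \in X a)%:R * bb T g h * (h \in Y c)%:R.
  rewrite big_mkcond; apply: eq_bigr => g _; rewrite big_mkcond /=.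
  case: (g \in X a); last by rewrite big1 // => h _; rewrite !mul0r.
  by apply: eq_bigr => h _; rewrite mul1r; case: (h \in Y c); rewrite ?mulr1 ?mulr0.
under eq_bigr do rewrite mxE big_distrl.
rewrite exchange_big [RHS]big_enum_val; apply: eq_bigr => k _.
by rewrite [RHS]big_enum_val; apply: eq_bigr => l _; rewrite !mxE.
Qed.

Lemma filling_matrixE T m (X : 'I_m -> {set bG T}) :
  filling_matrix R T m X = ind_mx X *m form_mx T *m (ind_mx X)^T.
Proof. by rewrite ind_form_indE. Qed.

Lemma filling_matrix_ind_mul T m m' (X : 'I_m -> {set bG T}) (Y : 'I_m' -> {set bG T})
    (P : 'M[R]_(m', m)) :
  ind_mx Y = P *m ind_mx X ->
  filling_matrix R T m' Y = P *m filling_matrix R T m X *m P^T.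
Proof. by move=> eqY; rewrite !filling_matrixE eqY trmx_mul !mulmxA. Qed.

Definition merge_blocks {G : finType} {m} (Y : 'I_m -> {set G}) (i j a : 'I_m) :
    {set G} :=
  if a == i then Y i :|: Y j else if a == j then set0 else Y a.

Section MergeBlocks.
Context {G : finType} {m : nat} {Y : 'I_m -> {set G}} {i j : 'I_m}.
Hypotheses (Y_disj : forall a b, a != b -> [disjoint Y a & Y b]) (ij : i != j).

Lemma merge_blocks_disjoint a b :
  a != b -> [disjoint merge_blocks Y i j a & merge_blocks Y i j b].
Proof.
have merged_disj c : c != i -> c != j -> (Y i :|: Y j) :&: Y c = set0.
  by move=> ci cj; rewrite setIUl !disjoint_setI0 ?setU0 // Y_disj // eq_sym.
rewrite /merge_blocks -setI_eq0 => ab.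
case: (eqVneq a i) => [ai|ai]; case: (eqVneq b i) => [bi|bi].
- by rewrite ai bi eqxx in ab.
- by case: (eqVneq b j) => [_|bj]; rewrite ?setI0 ?merged_disj.
- by case: (eqVneq a j) => [_|aj]; rewrite ?set0I // setIC merged_disj.
- case: (eqVneq a j) => [_|aj]; first by rewrite set0I.
  by case: (eqVneq b j) => [_|bj]; rewrite ?setI0 // setI_eq0 Y_disj.
Qed.

Lemma bigcup_merge_blocks : \bigcup_a merge_blocks Y i j a = \bigcup_a Y a.
Proof.
apply/setP => y; apply/bigcupP/bigcupP => [[a _]|[a _ ya]].
  rewrite /merge_blocks; case: (a == i); first by case/setUP; [exists i | exists j].
  by case: (a == j); rewrite ?inE // => ya; exists a.
rewrite /merge_blocks; case: (eqVneq a i) => [ai|ai].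
  by exists i; rewrite ?eqxx // inE -ai ya.
case: (eqVneq a j) => [aj|aj]; first by exists i; rewrite ?eqxx // inE -aj ya orbT.
by exists a; rewrite ?(negPf ai) ?(negPf aj).
Qed.

Lemma ind_mx_merge_blocks :
  ind_mx (merge_blocks Y i j) = (1%:M + delta_mx i j - delta_mx j j) *m ind_mx Y.
Proof.
apply/matrixP => a l; rewrite !mulmxDl mulNmx mul1mx.
move: (mul_delta_mxE i j (ind_mx Y) a l) (mul_delta_mxE j j (ind_mx Y) a l).
rewrite !mxE => -> ->; rewrite /merge_blocks; case: (eqVneq a i) => [->|ai].
  rewrite (negPf ij) inE mul1r mul0r subr0.
  case: (boolP (_ \in Y i)) => [/(disjointFr (Y_disj _ _ ij)) ->|]; last by rewrite add0r.
  by rewrite addr0.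
rewrite mul0r addr0; case: (eqVneq a j) => [->|aj]; last by rewrite mul0r subr0.
by rewrite inE mul1r subrr.
Qed.

End MergeBlocks.


Section Embedding.
Context {T U : bmat R} {f : bG T -> bG U}.
Hypothesis femb : bmat_emb R T U f.

Let f_inj : injective f. Proof. by case: femb. Qed.
Local Notation im := (f @: [set: bG T]).
Local Notation N := (~: im).

Definition emb_mx : 'M[R]_(#|bG T|, #|bG U|) := ind_mx (fun k => [set f (enum_val k)]).

Lemma emb_form : emb_mx *m form_mx U *m emb_mx^T = form_mx T.
Proof.
have [_ _ fb] := femb.
by rewrite ind_form_indE; apply/matrixP => k l; rewrite !mxE /bset !big_set1 fb.
Qed.

Lemma ind_mx_emb m (X : 'I_m -> {set bG T}) :
  ind_mx X *m emb_mx = ind_mx (fun a => f @: X a).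
Proof.
apply/matrixP => a l; rewrite !mxE; under eq_bigr do rewrite !mxE inE.
move: (enum_val l) => y.
case: (boolP (y \in f @: X a)) => [/imsetP[x xX ->]|yNX].
  rewrite (bigD1 (enum_rank x)) //= enum_rankK xX eqxx mulr1 big1 ?addr0 // => k.
  rewrite -(inj_eq enum_val_inj) enum_rankK eq_sym (inj_eq f_inj) => /negPf ->.
  by rewrite mulr0.
apply: big1 => k _; case: (eqVneq y (f (enum_val k))) => [yk|_]; last by rewrite mulr0.
suff -> : (enum_val k \in X a) = false by rewrite mul0r.
by apply: contraNF yNX => xk; rewrite yk imset_f.
Qed.

Lemma card_preimset_emb (A : {set bG U}) : #|f @^-1: A| = #|A :&: im|.
Proof. by rewrite -imset_preimset card_imset. Qed.

Lemma ind_mx_preimset_emb m (Y : 'I_m -> {set bG U}) :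
  ind_mx (fun a => f @^-1: Y a) *m emb_mx = ind_mx (fun a => Y a :&: im).
Proof. by rewrite ind_mx_emb; apply/matrixP => a l; rewrite !mxE imset_preimset. Qed.

Lemma card_preimset_le (A : {set bG U}) : (#|f @^-1: A| <= #|A|)%N.
Proof. by rewrite card_preimset_emb subset_leq_card ?subsetIl. Qed.

Lemma card_preimset_lt {A : {set bG U}} {g} : g \in A -> g \in N -> (#|f @^-1: A| < #|A|)%N.
Proof.
move=> gA g_new; rewrite card_preimset_emb proper_card // properEneq subsetIl andbT.
by apply: contraTneq gA => <-; rewrite inE; apply/nandP; right; rewrite -in_setC.
Qed.

Definition extend_filling {m} (X : 'I_m -> {set bG T}) (j : 'I_m.+1) : {set bG U} :=
  if unlift ord_max j is Some a then f @: X a else N.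

Lemma extend_filling_is_filling m (X : 'I_m -> {set bG T}) :
  (#|N| <= 2)%N -> is_filling R T m X -> is_filling R U m.+1 (extend_filling X).
Proof.
move=> N_le2 [X_disj X_cover X_le2 [i0 X_i0]]; have [_ fs _] := femb.
have im_disj_N (A : {set bG T}) : [disjoint f @: A & N].
  by rewrite -subsets_disjoint imsetS ?subsetT.
split.
- move=> j k; rewrite /extend_filling.
  case: unliftP => [a ->|->]; case: unliftP => [b ->|->] //; last by rewrite eqxx.
  + by move=> ab; rewrite imset_disjoint ?X_disj //; apply: contraNneq ab => ->.
  + by rewrite disjoint_sym.
- apply/setP => y; rewrite inE; apply/bigcupP.
  case: (boolP (y \in im)) => [/imsetP[x _ ->]|yN]; last first.
    by exists ord_max; rewrite // /extend_filling unlift_none inE.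
  have : x \in \bigcup_(a < m) X a by rewrite X_cover inE.
  case/bigcupP => a _ xa; exists (lift ord_max a) => //.
  by rewrite /extend_filling liftK imset_f.
- move=> j; rewrite /extend_filling; case: unliftP => [a _|_] //.
  exact: leq_trans (leq_imset_card _ _) (X_le2 a).
- by exists (lift ord_max i0); rewrite /extend_filling liftK X_i0 imset_set1 fs.
Qed.

Variable c : R.
Hypothesis bset_new : forall x, bset R U [set f x] N = c * bb U (f x) (bs U).

Definition radical_row : 'rV[R]_#|bG U| :=
  ind_mx (fun _ : 'I_1 => N) - c *: ind_mx (fun _ : 'I_1 => [set bs U]).

Lemma radical_rowE l :
  radical_row 0 l = (enum_val l \in N)%:R - c * (enum_val l == bs U)%:R.
Proof. by rewrite !mxE inE. Qed.

Lemma emb_form_radical : emb_mx *m form_mx U *m radical_row^T = 0.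
Proof.
rewrite linearB linearZ /= mulmxBr -scalemxAr !ind_form_indE.
by apply/matrixP => k l; rewrite !mxE bset_new /bset !big_set1 subrr.
Qed.

Lemma emb_form_congr m (V : 'M[R]_(m, #|bG T|)) (d : 'cV_m) :
  let W := V *m emb_mx + d *m radical_row in
  W *m form_mx U *m W^T = V *m form_mx T *m V^T.
Proof.
apply: form_congr_shift; [exact: form_mx_skew | exact: form_mx_alt |
  exact: emb_form_radical | exact: emb_form].
Qed.

Lemma dominated_fillings_extension : (#|N| <= 2)%N -> dominated_fillings T U.
Proof.
move=> N_le2 m X fillX; have [_ _ _ [i0 X_i0]] := fillX; have [_ fs _] := femb.
exists m.+1, (extend_filling X); split; first exact: extend_filling_is_filling.
(* The last row encodes 1_N = c 1_(f @: X i0) + u. *)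
pose P : 'M[R]_(m.+1, m) := \matrix_(j, b)
  if unlift ord_max j is Some a then (a == b)%:R else c * (b == i0)%:R.
apply: (filling_sigma_le_congr P); rewrite filling_matrixE.
suff -> : ind_mx (extend_filling X) =
    P *m ind_mx X *m emb_mx + delta_mx ord_max 0 *m radical_row.
  by rewrite emb_form_congr filling_matrixE trmx_mul !mulmxA.
apply/matrixP => j l; rewrite -mulmxA ind_mx_emb !mxE big_ord1 radical_rowE.
rewrite !mxE /extend_filling; case: unliftP => [a ->|->].
  under eq_bigr do rewrite !mxE liftK.
  by rewrite sum_delta_mull [lift _ _ == _]eq_sym (negPf (neq_lift _ _)) mul0r addr0.
under eq_bigr do rewrite !mxE unlift_none -mulrA eq_sym.
rewrite -big_distrr sum_delta_mull X_i0 imset_set1 fs inE eqxx !mul1r.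
by rewrite addrC subrK.
Qed.

Lemma preimage_filling {m} {Y : 'I_m -> {set bG U}} {k i0} :
    (forall a b, a != b -> [disjoint Y a & Y b]) -> N \subset Y k ->
    Y i0 = [set bs U] -> (forall x, exists a, f x \in Y a) ->
    (forall a, #|f @^-1: Y a| <= 2)%N ->
  let X a := f @^-1: Y a in
  is_filling R T m X /\ (filling_sigma R T m X <= filling_sigma R U m Y)%N.
Proof.
move=> Y_disj N_k Y_i0 Y_cover Y_le2 X; have [_ fs _] := femb; split.
  split => // [a b /Y_disj||].
  - by rewrite -!setI_eq0 -preimsetI => /eqP ->; rewrite preimset0.
  - apply/setP => x; rewrite inE; apply/bigcupP.
    by have [a fx_a] := Y_cover x; exists a; rewrite ?inE.
  - by exists i0; apply/setP => x; rewrite !inE Y_i0 inE -fs (inj_eq f_inj).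
(* 1_(Y a) = 1_(Y a :&: im) + [a == k] (c 1_(Y i0) + u). *)
pose P : 'M[R]_m := 1%:M - c *: delta_mx k i0.
apply: (filling_sigma_le_congr P).
have split_new : ind_mx Y =
    ind_mx (fun a => Y a :&: im) + delta_mx k 0 *m ind_mx (fun _ : 'I_1 => N).
  apply/matrixP => a l; rewrite !mxE big_ord1 !mxE !inE.
  case: (boolP (enum_val l \in im)) => [_|y_new]; first by rewrite andbT mulr0 addr0.
  rewrite andbF add0r mulr1 andbT.
  case: (eqVneq a k) => [->|ak]; first by rewrite (subsetP N_k) // inE.
  by rewrite (disjointFl (Y_disj _ _ ak)) // (subsetP N_k) // inE.
have row_i0 : delta_mx 0 i0 *m ind_mx Y = ind_mx (fun _ : 'I_1 => [set bs U]).
  by apply/matrixP => a l; rewrite -rowE !mxE Y_i0.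
have PY : P *m ind_mx Y = ind_mx X *m emb_mx + delta_mx k 0 *m radical_row.
  rewrite ind_mx_preimset_emb mulmxBl mul1mx -scalemxAl -(mul_delta_mx (0 : 'I_1)).
  rewrite -mulmxA row_i0.
  by rewrite {1}split_new mulmxBr -scalemxAr addrA.
rewrite !filling_matrixE -(emb_form_congr _ _ (delta_mx k 0)) -PY.
by rewrite trmx_mul !mulmxA.
Qed.

Lemma dominated_fillings_restriction {g1 g2} : N = [set g1; g2] -> dominated_fillings U T.
Proof.
move=> N_g m Y [Y_disj Y_cover Y_le2 [i0 Y_i0]]; have [_ fs _] := femb.
have Y_mem y : exists a, y \in Y a.
  have /bigcupP[a _ ya] : y \in \bigcup_a Y a by rewrite Y_cover inE.
  by exists a.
have [i g1_i] := Y_mem g1; have [j g2_j] := Y_mem g2.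
have [g1_new g2_new] : g1 \in N /\ g2 \in N by rewrite N_g !inE !eqxx orbT.
have new_not_i0 a g : g \in N -> g \in Y a -> a != i0.
  move=> g_new; apply: contraTneq => ->; rewrite Y_i0 inE.
  by apply: contraTneq g_new => ->; rewrite inE negbK -fs imset_f.
case: (eqVneq i j) g2_j => [<- g2_i|ij g2_j].
  have N_i : N \subset Y i by rewrite N_g subUset !sub1set g1_i g2_i.
  have [fillX leXY] := preimage_filling Y_disj N_i Y_i0 (fun x => Y_mem (f x))
    (fun a => leq_trans (card_preimset_le _) (Y_le2 a)).
  by exists m, (fun a => f @^-1: Y a).
(* The merged block keeps at most one old element from each of the two blocks. *)
pose Y' := merge_blocks Y i j.
have Y'_le2 a : (#|f @^-1: Y' a| <= 2)%N.
  rewrite /Y' /merge_blocks; case: (eqVneq a i) => [_|_].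
    rewrite preimsetU cardsU; apply: leq_trans (leq_subr _ _) _.
    rewrite -[2%N]/(1 + 1)%N; apply: leq_add; rewrite -ltnS.
    - exact: leq_trans (card_preimset_lt g1_i g1_new) (Y_le2 i).
    - exact: leq_trans (card_preimset_lt g2_j g2_new) (Y_le2 j).
  case: eqVneq => _; first by rewrite preimset0 cards0.
  exact: leq_trans (card_preimset_le _) (Y_le2 a).
have Y'_mem x : exists a, f x \in Y' a.
  have : f x \in \bigcup_a Y' a by rewrite bigcup_merge_blocks // Y_cover inE.
  by case/bigcupP => a _; exists a.
have Y'_i0 : Y' i0 = [set bs U].
  by rewrite /Y' /merge_blocks eq_sym (negPf (new_not_i0 _ _ g1_new g1_i)) eq_sym
    (negPf (new_not_i0 _ _ g2_new g2_j)).
have N_i : N \subset Y' i.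
  by rewrite /Y' /merge_blocks eqxx N_g subUset !sub1set !inE g1_i g2_j orbT.
have [fillX leXY'] :=
  preimage_filling (merge_blocks_disjoint Y_disj) N_i Y'_i0 Y'_mem Y'_le2.
exists m, (fun a => f @^-1: Y' a); split => //; apply: leq_trans leXY' _.
by apply: filling_sigma_le_congr; apply: filling_matrix_ind_mul; apply: ind_mx_merge_blocks.
Qed.

End Embedding.


Lemma bset1 T g h : bset R T [set g] [set h] = bb T g h.
Proof. by rewrite /bset !big_set1. Qed.

Lemma ext_dominated {T U f} c g1 g2 :
    bmat_emb R T U f -> ~: (f @: [set: bG T]) = [set g1; g2] ->
    (forall x, bset R U [set f x] [set g1; g2] = c * bb U (f x) (bs U)) ->
  dominated_fillings T U /\ dominated_fillings U T.
Proof.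
move=> femb N_g; rewrite -N_g => bset_new.
split; last exact (dominated_fillings_restriction femb c bset_new N_g).
apply: dominated_fillings_extension femb c bset_new _.
by rewrite N_g cards2; case: (g1 != g2).
Qed.

Lemma bmat_iso_dominated T U : bmat_iso R T U -> dominated_fillings T U.
Proof.
move=> [f [[g fK gK] fs fb]]; have femb : bmat_emb R T U f by split=> //; apply: can_inj fK.
have N0 : ~: (f @: [set: bG T]) = set0.
  by apply: setC_imset_eq => [x|y _]; [rewrite inE | exists (g y)].
apply: (dominated_fillings_extension femb 0); last by rewrite N0 cards0.
by move=> x; rewrite N0 /bset big_set1 big_set0 mul0r.
Qed.

Lemma bmat_iso_sym T U : bmat_iso R T U -> bmat_iso R U T.
Proof.
move=> [f [[g fK gK] fs fb]]; exists g; split; first by exists f.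
  by rewrite -fs fK.
by move=> x y; rewrite -fb !gK.
Qed.

Lemma elem_ext_dominated T U :
  elem_ext R T U -> dominated_fillings T U /\ dominated_fillings U T.
Proof.
case=> [[f [g [femb f_g g_cover bg]]]|[f [g [femb f_g g_cover bg]]]|
        [f [g1 [g2 [femb g12 f_g g_cover bg]]]]]; have [_ fs fb] := femb.
- apply: (ext_dominated 0 g g femb) => [|x].
    rewrite setUid; apply: setC_imset_eq => [x|y]; first by rewrite inE; apply/eqP.
    by rewrite inE; case: (g_cover y) => [-> /eqP|].
  by rewrite setUid bset1 bb_skew bg oppr0 mul0r.
- apply: (ext_dominated 1 g g femb) => [|x].
    rewrite setUid; apply: setC_imset_eq => [x|y]; first by rewrite inE; apply/eqP.
    by rewrite inE; case: (g_cover y) => [-> /eqP|].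
  by rewrite setUid bset1 bb_skew bg -fs fb mul1r -bb_skew.
- apply: (ext_dominated 1 g1 g2 femb) => [|x].
    apply: setC_imset_eq => [x|y].
      by rewrite !inE negb_or; case: (f_g x) => /eqP-> /eqP->.
    by rewrite !inE negb_or; case: (g_cover y) => [->|->|//]; rewrite eqxx ?andbF.
  rewrite /bset big_set1 big_setU1 ?big_set1; last by rewrite inE; apply/eqP.
  rewrite (bb_skew _ _ _ g1) (bb_skew _ _ _ g2).
  by rewrite /= -opprD bg -fs fb mul1r -bb_skew.
Qed.

Lemma homologous_dominated T U :
  homologous T U -> dominated_fillings T U /\ dominated_fillings U T.
Proof.
elim=> {T U} [T|T U iso|T U /elem_ext_dominated //|T U /elem_ext_dominated [] //|
              T U _ [] //|T1 T2 T3 _ [d12 d21] _ [d23 d32]].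
- by split; apply: dominated_fillings_refl.
- by split; apply: bmat_iso_dominated; last apply: bmat_iso_sym.
- by split; [apply: dominated_fillings_trans d12 d23 |
             apply: dominated_fillings_trans d32 d21].
Qed.

End Genus.

Theorem lemma7p1 (R : idomainType) (T T' : bmat R) :
  homologous T T' -> forall k : nat, is_genus T k <-> is_genus T' k.
Proof.
move=> /homologous_dominated [dTT' dT'T] k.
by split; apply: is_genus_dominated.
Qed.
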